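(* Let $\mathcal H=(M,n,\mathcal R)$ be an MMS, $S$ a closed bounded convex polytope, $x_0\in S$, and let $0<\Delta'\le\Delta$ satisfy $D_\Delta\cap S=g_{\Delta',\Delta}(D_{\Delta'}\cap S)$. If the scheduler has a winning strategy from $x_0$ in $\Sigma_{\Delta'}$, then the scheduler has a winning strategy from $x_0$ in $\Sigma_\Delta$.
   Context: An MMS is a tuple $\mathcal H=(M,n,\mathcal R)$ with $M$ a finite nonempty set of modes and $\mathcal R(m)\subseteq\mathbb R^n$ finite nonempty for each mode; let $R=\bigcup_m\mathcal R(m)$. For $\Delta>0$ let $D_\Delta=\{x_0+\Delta\sum_{r\in R}i_r r: i_r\in\mathbb N\}$, and let $g_{\Delta',\Delta}:D_{\Delta'}\to D_\Delta$ send $x_0+\Delta'\sum_{r}i_r r$ to $x_0+\Delta\sum_r i_r r$ (well defined). The schedulability game from $x_0$: in round $i\ge1$ the scheduler chooses $(m_i,t_i)\in M\times\mathbb R_{>0}$, the environment chooses $r_i\in\mathcal R(m_i)$, and $x_i=x_{i-1}+t_ir_i$; scheduler strategies map finite histories to timed moves. $\Sigma_\Delta$ is the set of scheduler strategies all of whose chosen delays are positive integer multiples of $\Delta$. A scheduler strategy is winning from $x_0$ if against every environment strategy the run satisfies $x_i\in S$ and $x_i+tr_{i+1}\in S$ for all $i\ge0$, $t\in[0,t_{i+1}]$, and $\sum_it_i=\infty$. *)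

From Stdlib Require Import Reals List.
From Stdlib Require Fin.
Import ListNotations.
Open Scope R_scope.
Set Implicit Arguments.

Definition Vec (n : nat) := Fin.t n -> R.

Definition vadd {n} (x y : Vec n) : Vec n := fun i => x i + y i.
Definition vscale {n} (c : R) (x : Vec n) : Vec n := fun i => c * x i.
Definition vzero {n} : Vec n := fun _ => 0.

Fixpoint dot {n : nat} : Vec n -> Vec n -> R :=
  match n return Vec n -> Vec n -> R with
  | O => fun _ _ => 0
  | S k => fun a x => a Fin.F1 * x Fin.F1 + dot (fun i => a (Fin.FS i)) (fun i => x (Fin.FS i))
  end.

Record MMS := {
  mode : Type;
  modes : list mode;                         (* enumeration of the finite set M *)
  modes_complete : forall m : mode, In m modes;
  modes_nonempty : modes <> nil;
  dim : nat;
  rates : mode -> list (Vec dim);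
  rates_nonempty : forall m, rates m <> nil
}.

Definition all_rates (H : MMS) : list (Vec (dim H)) :=
  concat (map (rates H) (modes H)).

Record polytope (n : nat) := {
  constraints : list (Vec n * R);
  bounded : exists B : R, forall x : Vec n,
      (forall c, In c constraints -> dot (fst c) x <= snd c) ->
      forall i, Rabs (x i) <= B
}.

Definition inS {n} (S : polytope n) (x : Vec n) : Prop :=
  forall c, In c (constraints S) -> dot (fst c) x <= snd c.

Fixpoint lincomb {n} (rs : list (Vec n)) (c : nat -> nat) : Vec n :=
  match rs with
  | [] => vzero
  | r :: rs' => vadd (vscale (INR (c O)) r) (lincomb rs' (fun j => c (S j)))
  end.

Definition grid_pt (H : MMS) (x0 : Vec (dim H)) (Delta : R) (c : nat -> nat) : Vec (dim H) :=
  vadd x0 (vscale Delta (lincomb (all_rates H) c)).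

Definition inD (H : MMS) (x0 : Vec (dim H)) (Delta : R) (y : Vec (dim H)) : Prop :=
  exists c, y = grid_pt H x0 Delta c.

(** D_Delta ∩ S = g_{Delta',Delta}(D_Delta' ∩ S), where
    g (x0 + Delta' sum i_r r) = x0 + Delta sum i_r r. *)
Definition grid_condition (H : MMS) (S : polytope (dim H)) (x0 : Vec (dim H)) (Delta' Delta : R) : Prop :=
  forall y : Vec (dim H),
    (inD H x0 Delta y /\ inS S y) <->
    (exists c, inS S (grid_pt H x0 Delta' c) /\ y = grid_pt H x0 Delta c).

(** The schedulability game. A round is (mode, delay, rate). *)
Definition round (H : MMS) : Type := (mode H * R * Vec (dim H))%type.
Definition history (H : MMS) : Type := list (round H).

Definition sched_strategy (H : MMS) : Type := history H -> (mode H * R).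
Definition env_strategy (H : MMS) : Type := history H -> (mode H * R) -> Vec (dim H).

Definition valid_sched (H : MMS) (sigma : sched_strategy H) : Prop :=
  forall h, 0 < snd (sigma h).

Definition valid_env (H : MMS) (env : env_strategy H) : Prop :=
  forall h mv, In (env h mv) (rates H (fst mv)).

Definition in_Sigma (H : MMS) (Delta : R) (sigma : sched_strategy H) : Prop :=
  valid_sched sigma /\
  forall h, exists k : nat, (1 <= k)%nat /\ snd (sigma h) = INR k * Delta.

Fixpoint hist (H : MMS) (sigma : sched_strategy H) (env : env_strategy H) (k : nat) : history H :=
  match k with
  | O => []
  | S k' => let h := hist sigma env k' in
            let mv := sigma h in
            h ++ [(fst mv, snd mv, env h mv)]
  end.

Fixpoint pos_of (H : MMS) (x0 : Vec (dim H)) (h : history H) : Vec (dim H) :=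
  match h with
  | [] => x0
  | (m, t, r) :: h' => @pos_of H (vadd x0 (vscale t r)) h'
  end.

(** x_k, and the (k+1)-th move (t_{k+1}, r_{k+1}). *)
Definition pos (H : MMS) (sigma : sched_strategy H) (env : env_strategy H) (x0 : Vec (dim H)) (k : nat) :=
  @pos_of H x0 (hist sigma env k).
Definition delay_at (H : MMS) (sigma : sched_strategy H) (env : env_strategy H) (k : nat) : R :=
  snd (sigma (hist sigma env k)).
Definition rate_at (H : MMS) (sigma : sched_strategy H) (env : env_strategy H) (k : nat) : Vec (dim H) :=
  env (hist sigma env k) (sigma (hist sigma env k)).

Definition winning (H : MMS) (S : polytope (dim H)) (x0 : Vec (dim H)) (sigma : sched_strategy H) : Prop :=
  forall env : env_strategy H, valid_env env ->
    (forall k : nat,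
        inS S (pos sigma env x0 k) /\
        forall t, 0 <= t <= delay_at sigma env k ->
          inS S (vadd (pos sigma env x0 k) (vscale t (rate_at sigma env k)))) /\
    (forall B : R, exists k : nat, sum_f_R0 (delay_at sigma env) k > B).

(* Let s = Delta / Delta' > 0.  A winning scheduler in Sigma_Delta' is turned
   into one in Sigma_Delta by stretching time by the factor s: on a history it
   divides the recorded delays by s, consults the old strategy, and multiplies
   the proposed delay by s.  Every environment of the new game induces one of
   the old game (compress its input by s), and the two plays use the same
   modes and rates, the new delays being s times the old ones.  Hence the
   k-th positions of the two plays are x0 + Delta' sum c_r r and
   x0 + Delta sum c_r r for one common vector of counts c; since the old
   position lies in S, the grid condition puts the new one in S as well.
   Safety along each straight segment follows by convexity of S from safety
   of its two endpoints, and the total elapsed time is s times the old one,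
   hence still unbounded. *)

From Pilot Require Import Defs.
From Stdlib Require Import Reals List Lra Psatz FunctionalExtensionality.
Import ListNotations.
Open Scope R_scope.
Set Implicit Arguments.

Lemma dot_vadd_vscale n (a x y : Vec n) (t : R) :
  dot a (vadd x (vscale t y)) = dot a x + t * dot a y.
Proof.
  revert a x y; induction n as [|n IH]; intros a x y; simpl.
  - ring.
  - specialize (IH (fun i => a (Fin.FS i)) (fun i => x (Fin.FS i))
                   (fun i => y (Fin.FS i))).
    unfold vadd, vscale in *; rewrite IH; ring.
Qed.

Lemma inS_segment n (S : polytope n) (x r : Vec n) (T t : R) :
  inS S x -> inS S (vadd x (vscale T r)) -> 0 <= t <= T ->
  inS S (vadd x (vscale t r)).
Proof.
  intros Hx HxT Ht c Hc.
  specialize (Hx c Hc); specialize (HxT c Hc).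
  rewrite dot_vadd_vscale in *.
  destruct (Rle_dec 0 (dot (fst c) r)); nra.
Qed.

Lemma lincomb_zero n (rs : list (Vec n)) : lincomb rs (fun _ => 0%nat) = vzero.
Proof.
  induction rs as [|r rs IH]; simpl; [reflexivity|].
  rewrite IH; apply functional_extensionality; intro i.
  unfold vadd, vscale, vzero; simpl; ring.
Qed.

Lemma lincomb_add_mul n (rs : list (Vec n)) (c e : nat -> nat) (k : nat) i :
  lincomb rs (fun j => (c j + k * e j)%nat) i = lincomb rs c i + INR k * lincomb rs e i.
Proof.
  revert c e; induction rs as [|r rs IH]; intros c e; simpl.
  - unfold vzero; ring.
  - unfold vadd, vscale; rewrite (IH (fun j => c (S j)) (fun j => e (S j))).
    rewrite plus_INR, mult_INR; ring.
Qed.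

Lemma lincomb_In n (rs : list (Vec n)) (r : Vec n) :
  In r rs -> exists e, lincomb rs e = r.
Proof.
  induction rs as [|r0 rs IH]; intros Hin; [destruct Hin|].
  destruct Hin as [<-|Hin].
  - exists (fun j => match j with O => 1%nat | _ => 0%nat end); simpl.
    rewrite lincomb_zero; apply functional_extensionality; intro i.
    unfold vadd, vscale, vzero; simpl; ring.
  - destruct (IH Hin) as [e He].
    exists (fun j => match j with O => 0%nat | S j => e j end); simpl.
    change (lincomb rs (fun j => e j)) with (lincomb rs e).
    rewrite He; apply functional_extensionality; intro i.
    unfold vadd, vscale; simpl; ring.
Qed.

Lemma grid_pt_origin H (x0 : Vec (dim H)) (d : R) :
  grid_pt H x0 d (fun _ => 0%nat) = x0.
Proof.
  unfold grid_pt; rewrite lincomb_zero; apply functional_extensionality; intro i.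
  unfold vadd, vscale, vzero; ring.
Qed.

Lemma grid_step H (x0 : Vec (dim H)) (c : nat -> nat) (r : Vec (dim H)) (n : nat) :
  In r (all_rates H) ->
  exists c', forall d, vadd (grid_pt H x0 d c) (vscale (INR n * d) r) = grid_pt H x0 d c'.
Proof.
  intros Hr; destruct (lincomb_In _ _ Hr) as [e He].
  exists (fun j => (c j + n * e j)%nat); intro d.
  apply functional_extensionality; intro i.
  unfold grid_pt, vadd, vscale; rewrite lincomb_add_mul, He; ring.
Qed.

Lemma pos_of_snoc H (x0 : Vec (dim H)) (h : history H) m t r :
  pos_of x0 (h ++ [(m, t, r)]) = vadd (pos_of x0 h) (vscale t r).
Proof.
  revert x0; induction h as [|[[m0 t0] r0] h IH]; intro x0; simpl.
  - reflexivity.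
  - apply IH.
Qed.

Lemma pos_succ H (sigma : sched_strategy H) (env : env_strategy H) x0 k :
  Defs.pos sigma env x0 (S k) =
  vadd (Defs.pos sigma env x0 k) (vscale (delay_at sigma env k) (rate_at sigma env k)).
Proof. unfold Defs.pos; simpl; apply pos_of_snoc. Qed.

Lemma rate_at_In H (sigma : sched_strategy H) (env : env_strategy H) k :
  valid_env env -> In (rate_at sigma env k) (all_rates H).
Proof.
  intros Henv; unfold all_rates, rate_at; apply in_concat.
  exists (rates H (fst (sigma (hist sigma env k)))); split.
  - apply in_map, modes_complete.
  - apply Henv.
Qed.

Section TimeStretching.

Variables (H : MMS) (s : R).
Hypothesis s_pos : 0 < s.

Definition compress_round (x : round H) : round H := (fst (fst x), snd (fst x) / s, snd x).
Definition stretch_round (x : round H) : round H := (fst (fst x), snd (fst x) * s, snd x).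

Lemma compress_stretch_history (h : history H) :
  map compress_round (map stretch_round h) = h.
Proof.
  induction h as [|[[m t] r] h IH]; simpl; [reflexivity|].
  rewrite IH; unfold compress_round, stretch_round; simpl.
  replace (t * s / s) with t by (field; lra); reflexivity.
Qed.

Definition stretch_sched (sigma : sched_strategy H) : sched_strategy H :=
  fun h => (fst (sigma (map compress_round h)), snd (sigma (map compress_round h)) * s).

Definition compress_env (env : env_strategy H) : env_strategy H :=
  fun h mv => env (map stretch_round h) (fst mv, snd mv * s).

Lemma valid_compress_env env : valid_env env -> valid_env (compress_env env).
Proof. intros Henv h mv; apply (Henv _ (fst mv, snd mv * s)). Qed.

Lemma in_Sigma_stretch d sigma : in_Sigma d sigma -> in_Sigma (d * s) (stretch_sched sigma).
Proof.
  intros [Hval Hmul]; split.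
  - intro h; specialize (Hval (map compress_round h)); simpl; nra.
  - intro h; destruct (Hmul (map compress_round h)) as [k [Hk Ht]].
    exists k; split; [exact Hk|]; simpl; rewrite Ht; ring.
Qed.

Variables (sigma : sched_strategy H) (env : env_strategy H).

Lemma hist_stretch k :
  hist (stretch_sched sigma) env k = map stretch_round (hist sigma (compress_env env) k).
Proof.
  induction k as [|k IH]; simpl; [reflexivity|].
  rewrite IH, map_app; unfold stretch_sched at 1.
  rewrite compress_stretch_history; reflexivity.
Qed.

Lemma delay_at_stretch k :
  delay_at (stretch_sched sigma) env k = delay_at sigma (compress_env env) k * s.
Proof.
  unfold delay_at; rewrite hist_stretch; simpl.
  rewrite compress_stretch_history; reflexivity.
Qed.

Lemma rate_at_stretch k :
  rate_at (stretch_sched sigma) env k = rate_at sigma (compress_env env) k.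
Proof.
  unfold rate_at; rewrite hist_stretch; unfold stretch_sched.
  rewrite compress_stretch_history; reflexivity.
Qed.

Lemma stretch_positions_on_grids x0 d :
  in_Sigma d sigma -> valid_env env ->
  forall k, exists c,
    Defs.pos sigma (compress_env env) x0 k = grid_pt H x0 d c /\
    Defs.pos (stretch_sched sigma) env x0 k = grid_pt H x0 (d * s) c.
Proof.
  intros [_ Hmul] Henv; induction k as [|k [c [Eold Enew]]].
  - exists (fun _ => 0%nat); rewrite !grid_pt_origin; split; reflexivity.
  - destruct (Hmul (hist sigma (compress_env env) k)) as [n [_ Hn]].
    fold (delay_at sigma (compress_env env) k) in Hn.
    destruct (@grid_step H x0 c _ n (rate_at_In sigma k (valid_compress_env Henv)))
      as [c' Hc'].
    exists c'; rewrite !pos_succ, delay_at_stretch, rate_at_stretch, Eold, Enew, Hn.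
    split; [apply Hc'|].
    rewrite <- Hc'; f_equal; f_equal; ring.
Qed.

Lemma stretch_unbounded :
  (forall B, exists k, sum_f_R0 (delay_at sigma (compress_env env)) k > B) ->
  forall B, exists k, sum_f_R0 (delay_at (stretch_sched sigma) env) k > B.
Proof.
  intros Hdiv B; destruct (Hdiv (B / s)) as [k Hk]; exists k.
  rewrite (sum_eq _ _ k (fun i _ => delay_at_stretch i)), <- scal_sum.
  replace B with (s * (B / s)) by (field; lra).
  apply Rmult_lt_compat_l; assumption.
Qed.

End TimeStretching.

Theorem lemma6 (H : MMS) (S : polytope (dim H)) (x0 : Vec (dim H))
  (hx0 : inS S x0) (Delta' Delta : R)
  (hD' : 0 < Delta') (hle : Delta' <= Delta)
  (hgrid : grid_condition H S x0 Delta' Delta) :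
  (exists sigma : sched_strategy H, in_Sigma Delta' sigma /\ winning S x0 sigma) ->
  exists sigma : sched_strategy H, in_Sigma Delta sigma /\ winning S x0 sigma.
Proof.
  intros [sigma [Hsigma Hwin]].
  set (s := Delta / Delta').
  assert (Hs : 0 < s) by (unfold s; apply Rdiv_lt_0_compat; lra).
  assert (HDelta : Delta = Delta' * s) by (unfold s; field; lra).
  exists (stretch_sched s sigma); split.
  { rewrite HDelta; exact (in_Sigma_stretch Hs Hsigma). }
  intros env Henv.
  destruct (Hwin _ (valid_compress_env s Henv)) as [Hsafe Hdiv].
  (* Positions of the stretched play are images of safe grid points. *)
  assert (Hpos : forall k, inS S (Defs.pos (stretch_sched s sigma) env x0 k)).
  { intro k.
    destruct (stretch_positions_on_grids Hs x0 Hsigma Henv k) as [c [Eold Enew]].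
    assert (Hold : inS S (grid_pt H x0 Delta' c)) by (rewrite <- Eold; apply Hsafe).
    rewrite <- HDelta in Enew.
    exact (proj2 (proj2 (hgrid _) (ex_intro _ c (conj Hold Enew)))). }
  split; [|exact (stretch_unbounded Hs sigma env Hdiv)].
  intro k; split; [apply Hpos|].
  intros t Ht; apply (inS_segment (T := delay_at (stretch_sched s sigma) env k));
    [apply Hpos | rewrite <- pos_succ; apply Hpos | exact Ht].
Qed.
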